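(* Let $\boldsymbol k$ be an algebraically closed field with $\operatorname{char}\boldsymbol k\neq 2$, let $V$ be a vector space over $\boldsymbol k$ of finite dimension $n$, let $\mathcal C\subseteq V^*\otimes V^*\otimes V$ be the subspace of tensors fixed by the involution $\ell\otimes\ell'\otimes v\mapsto\ell'\otimes\ell\otimes v$, and let $G:=\mathrm{GL}(V)$ act on the projectivization $P\mathcal C$ of $\mathcal C$ via its natural linear action on $\mathcal C$. Then there is a dense open subset of $P\mathcal C$ such that for every point in it, its stabilizer in $G$ coincides with the center of $G$. *)

From HB Require Import structures.
From mathcomp Require Import all_boot all_order all_algebra.
From mathcomp Require Import mpoly.
Set Implicit Arguments. Unset Strict Implicit. Unset Printing Implicit Defensive.
Import Order.TTheory GRing.Theory Num.Theory.
Local Open Scope ring_scope.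

(* V = k^n with standard basis e_0..e_{n-1}.  An element of V^* (x) V^* (x) V
   is given by its coordinate array t i j l (coefficient of e_i^* (x) e_j^* (x) e_l). *)
Definition tensor (k : Type) (n : nat) := 'I_n -> 'I_n -> 'I_n -> k.

Definition in_C (k : Type) (n : nat) (t : tensor k n) : Prop :=
  forall i j l, t i j l = t j i l.

Definition ncoord (n : nat) : nat := #|{: 'I_n * 'I_n * 'I_n}|.

Definition coords (k : Type) (n : nat) (t : tensor k n) : 'I_(ncoord n) -> k :=
  fun q => let: (i, j, l) := enum_val q in t i j l.

(* points of the projectivization PC are represented by nonzero tensors of C
   (two representatives giving the same point iff they are proportional) *)
Definition PC_rep (k : ringType) (n : nat) (t : tensor k n) : Prop :=
  in_C t /\ exists i j l, t i j l != 0.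

(* Zariski-open subsets of PC: complements of common zero loci of a set of
   homogeneous polynomials in the coordinates. A subset of PC is represented
   by a predicate U on representatives. *)
Definition zariski_open (k : fieldType) (n : nat) (U : tensor k n -> Prop) : Prop :=
  exists S : {mpoly k[ncoord n]} -> Prop,
    (forall p, S p -> exists d, p \is d.-homog) /\
    (forall t, PC_rep t -> (U t <-> exists p, S p /\ p.@[coords t] != 0)).

Definition zariski_dense (k : fieldType) (n : nat) (U : tensor k n -> Prop) : Prop :=
  forall W : tensor k n -> Prop, zariski_open W ->
    (exists t, PC_rep t /\ W t) -> exists t, PC_rep t /\ W t /\ U t.

(* natural action of g in GL(V) on V^* (x) V^* (x) V:
   (g.t)(x, y) = g t(g^-1 x, g^-1 y) *)
Definition act (k : fieldType) (n : nat) (g : 'M[k]_n) (t : tensor k n) : tensor k n :=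
  fun i j l => \sum_(a < n) \sum_(b < n) \sum_(c < n)
     invmx g a i * invmx g b j * g l c * t a b c.

Definition stabilizes (k : fieldType) (n : nat) (g : 'M[k]_n) (t : tensor k n) : Prop :=
  exists lam : k, forall i j l, act g t i j l = lam * t i j l.

Definition central (k : fieldType) (n : nat) (g : 'M[k]_n) : Prop :=
  exists a : k, a != 0 /\ g = a%:M.

(* A tensor t of V^* (x) V^* (x) V is a bilinear product x.y on V, with left
   multiplications L_x.  If g stabilizes [t], with g.t = lam t, then lam g is an
   automorphism of this product.  An automorphism fixes the trace form
   tau(x) = tr L_x, the Gram matrix B of (x, y) |-> tau(x.y), the vector
   u = adj(B) tau, and hence the vectors L_u^k u.  When det B and the determinant
   of (u, L_u u, ..., L_u^(n-1) u) are nonzero, these vectors form a basis, so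
   lam g = 1 and g is central.  The product of the two determinants is a
   homogeneous polynomial in the coordinates of t that is 1 at an explicit
   tensor of C; restricting to the line through that tensor and any point of a
   nonempty open set shows that its nonvanishing locus is dense. *)

From HB Require Import structures.
From mathcomp Require Import all_boot all_order all_algebra.
From mathcomp Require Import perm mpoly.
From mathcomp Require Import ring.
From Stdlib Require Import FunctionalExtensionality.
Set Implicit Arguments. Unset Strict Implicit. Unset Printing Implicit Defensive.
Import GRing.Theory.
Local Open Scope ring_scope.

Lemma col_matrixP (R : Type) (m p : nat) (A B : 'M[R]_(m, p)) :
  (forall j, col j A = col j B) <-> A = B.
Proof.
split=> [eqAB | -> //]; apply/matrixP => i j.
by have /colP/(_ i) := eqAB j; rewrite !mxE.
Qed.

Section TensorProduct.
Variables (R : comNzRingType) (n : nat).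
Implicit Types (t : tensor R n) (x y : 'cV[R]_n).

Definition dotv x y : R := \sum_i x i 0 * y i 0.

Definition lmul_mx t x : 'M[R]_n := \matrix_(l, j) \sum_i x i 0 * t i j l.

Definition trace_vec t : 'cV[R]_n := \col_i \sum_j t i j j.

Definition trace_gram t : 'M[R]_n :=
  \matrix_(i, j) \sum_l trace_vec t l 0 * t i j l.

Definition trace_dual t : 'cV[R]_n := \adj (trace_gram t) *m trace_vec t.

Definition power_vec t k : 'cV[R]_n :=
  iter k (mulmx (lmul_mx t (trace_dual t))) (trace_dual t).

Definition power_mx t : 'M[R]_n := \matrix_(l, k) power_vec t k l 0.

Definition rigid_det t : R := \det (trace_gram t) * \det (power_mx t).

Lemma dotvC x y : dotv x y = dotv y x.
Proof. by apply: eq_bigr => i _; rewrite mulrC. Qed.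

Lemma dotvZr c x y : dotv x (c *: y) = c * dotv x y.
Proof. by rewrite /dotv mulr_sumr; apply: eq_bigr => i _; rewrite mxE mulrCA. Qed.

Lemma dotv_delta i x : dotv (delta_mx i 0) x = x i 0.
Proof.
rewrite /dotv (bigD1 i) //= mxE !eqxx mul1r big1 ?addr0 // => j /negbTE ji.
by rewrite mxE ji mul0r.
Qed.

Lemma lmul_mxE t x y l :
  (lmul_mx t x *m y) l 0 = \sum_i \sum_j x i 0 * y j 0 * t i j l.
Proof.
rewrite mxE; under eq_bigr do rewrite mxE mulr_suml /=.
rewrite exchange_big; apply: eq_bigr => i _; apply: eq_bigr => j _.
by rewrite mulrAC.
Qed.

Lemma lmul_mx_delta t i j l :
  (lmul_mx t (delta_mx i 0) *m (delta_mx j 0 : 'cV_n)) l 0 = t i j l.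
Proof.
rewrite -colE !mxE (bigD1 i) //= mxE !eqxx mul1r big1 ?addr0 // => a /negbTE ai.
by rewrite mxE ai mul0r.
Qed.

Lemma lmul_mxZ t c x : lmul_mx t (c *: x) = c *: lmul_mx t x.
Proof.
apply/matrixP => l j; rewrite !mxE mulr_sumr.
by apply: eq_bigr => i _; rewrite mxE mulrA.
Qed.

Lemma mxtrace_lmul t x : \tr (lmul_mx t x) = dotv (trace_vec t) x.
Proof.
rewrite /mxtrace /dotv; under eq_bigr do rewrite mxE.
rewrite exchange_big; apply: eq_bigr => i _; rewrite mxE mulr_suml /=.
by apply: eq_bigr => j _; rewrite mulrC.
Qed.

Lemma trace_gramE t x y :
  dotv x (trace_gram t *m y) = dotv (trace_vec t) (lmul_mx t x *m y).
Proof.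
rewrite /dotv; under eq_bigr do rewrite mxE mulr_sumr /=.
under [RHS]eq_bigr => l _ do rewrite lmul_mxE mulr_sumr.
rewrite [RHS]exchange_big; apply: eq_bigr => i _ /=.
under [RHS]eq_bigr => l _ do rewrite mulr_sumr.
rewrite [RHS]exchange_big; apply: eq_bigr => j _ /=.
rewrite mxE mulr_suml mulr_sumr; apply: eq_bigr => l _.
rewrite mxE; ring.
Qed.

Lemma trace_dualE t x :
  dotv x (trace_gram t *m trace_dual t) = \det (trace_gram t) * dotv (trace_vec t) x.
Proof. by rewrite mulmxA mul_mx_adj mul_scalar_mx dotvZr dotvC. Qed.

End TensorProduct.

Section ProductAutomorphism.
Variables (F : fieldType) (n : nat) (t : tensor F n) (psi : 'M[F]_n).
Hypothesis psi_unit : psi \in unitmx.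
Hypothesis psi_mul : forall x y : 'cV_n,
  psi *m (lmul_mx t x *m y) = lmul_mx t (psi *m x) *m (psi *m y).

Lemma lmul_mx_conj x : lmul_mx t (psi *m x) = psi *m lmul_mx t x *m invmx psi.
Proof.
apply: (canRL (mulmxK psi_unit)); apply/col_matrixP => j.
by rewrite !colE -!mulmxA psi_mul.
Qed.

Lemma trace_vec_aut x : dotv (trace_vec t) (psi *m x) = dotv (trace_vec t) x.
Proof.
by rewrite -!mxtrace_lmul lmul_mx_conj mxtrace_mulC mulmxA mulVmx // mul1mx.
Qed.

Lemma trace_gram_aut x y :
  dotv (psi *m x) (trace_gram t *m (psi *m y)) = dotv x (trace_gram t *m y).
Proof. by rewrite !trace_gramE -psi_mul trace_vec_aut. Qed.

Hypothesis gram_unit : trace_gram t \in unitmx.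

Lemma trace_dual_aut : psi *m trace_dual t = trace_dual t.
Proof.
apply: (can_inj (mulKmx gram_unit)); apply/colP => i; rewrite -!dotv_delta.
have -> : delta_mx i 0 = psi *m (invmx psi *m delta_mx i 0) :> 'cV_n.
  by rewrite mulmxA mulmxV // mul1mx.
by rewrite trace_gram_aut !trace_dualE trace_vec_aut.
Qed.

Lemma power_vec_aut k : psi *m power_vec t k = power_vec t k.
Proof.
elim: k => [|k IHk]; first exact: trace_dual_aut.
by rewrite /power_vec iterS -/(power_vec t k) psi_mul trace_dual_aut IHk.
Qed.

Hypothesis power_unit : power_mx t \in unitmx.

Lemma aut_eq1 : psi = 1%:M.
Proof.
have fix_power : psi *m power_mx t = power_mx t.
  have col_power k : col k (power_mx t) = power_vec t k.
    by apply/colP => l; rewrite !mxE.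
  by apply/col_matrixP => k; rewrite !colE -mulmxA -!colE col_power power_vec_aut.
by rewrite -(mulmxK power_unit psi) fix_power mulmxV.
Qed.

End ProductAutomorphism.

Section Action.
Variables (F : fieldType) (n : nat).
Implicit Types (t : tensor F n) (g : 'M[F]_n) (x y : 'cV[F]_n).

Lemma bilinear_mxE x y (M : 'M[F]_n) :
  \sum_i \sum_j x i 0 * y j 0 * M i j = (x^T *m M *m y) 0 0.
Proof.
rewrite mxE exchange_big; apply: eq_bigr => j _ /=.
rewrite mxE mulr_suml; apply: eq_bigr => i _; rewrite mxE; ring.
Qed.

Definition contract_mx g t l : 'M[F]_n := \matrix_(a, b) \sum_c g l c * t a b c.

Lemma actE g t i j l :
  act g t i j l = ((invmx g)^T *m contract_mx g t l *m invmx g) i j.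
Proof.
rewrite mxE /act; under [RHS]eq_bigr do rewrite mxE mulr_suml.
rewrite [RHS]exchange_big; apply: eq_bigr => a _ /=; apply: eq_bigr => b _.
rewrite !mxE mulr_sumr mulr_suml; apply: eq_bigr => c _; ring.
Qed.

Lemma lmul_mx_act g t x y : g \in unitmx ->
  lmul_mx (act g t) (g *m x) *m (g *m y) = g *m (lmul_mx t x *m y).
Proof.
move=> g_unit; apply/colP => l; rewrite lmul_mxE.
under eq_bigr do under eq_bigr do rewrite actE.
rewrite bilinear_mxE.
have -> : (g *m x)^T *m ((invmx g)^T *m contract_mx g t l *m invmx g) *m (g *m y)
    = (invmx g *m (g *m x))^T *m contract_mx g t l *m (invmx g *m (g *m y)).
  by rewrite !trmx_mul !mulmxA.
rewrite !(mulKmx g_unit) -bilinear_mxE mxE.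
under [RHS]eq_bigr do rewrite lmul_mxE mulr_sumr.
rewrite [RHS]exchange_big; apply: eq_bigr => a _ /=.
under [RHS]eq_bigr do rewrite mulr_sumr.
rewrite [RHS]exchange_big; apply: eq_bigr => b _ /=.
rewrite mxE mulr_sumr; apply: eq_bigr => c _; ring.
Qed.

Lemma lmul_mx_scale t (s : tensor F n) lam x :
  (forall i j l, s i j l = lam * t i j l) -> lmul_mx s x = lam *: lmul_mx t x.
Proof.
move=> st; apply/matrixP => l j; rewrite !mxE mulr_sumr.
by apply: eq_bigr => i _; rewrite st mulrCA.
Qed.

Lemma stabilizes_aut g t lam : g \in unitmx ->
  (forall i j l, act g t i j l = lam * t i j l) ->
  forall x y, (lam *: g) *m (lmul_mx t x *m y)
    = lmul_mx t ((lam *: g) *m x) *m ((lam *: g) *m y).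
Proof.
move=> g_unit stab x y.
rewrite -!scalemxAl lmul_mxZ -lmul_mx_act // (lmul_mx_scale _ stab).
by rewrite -!scalemxAl -scalemxAr !scalerA.
Qed.

Lemma stabilizes_central t g : (exists i j l, t i j l != 0) ->
  rigid_det t != 0 -> g \in unitmx -> stabilizes g t -> central g.
Proof.
move=> [i [j [l t_ijl]]]; rewrite mulf_eq0 negb_or => /andP [gram0 power0].
move=> g_unit [lam stab].
have lam0 : lam != 0.
  apply: contra t_ijl => /eqP lam0; rewrite -lmul_mx_delta.
  rewrite -(mulKmx g_unit (_ *m _)) -lmul_mx_act // (lmul_mx_scale _ stab).
  by rewrite lam0 scale0r mul0mx mulmx0 mxE.
have psi_unit : lam *: g \in unitmx by rewrite unitmxZ ?unitfE.
have := aut_eq1 psi_unit (stabilizes_aut g_unit stab).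
rewrite !unitmxE !unitfE => /(_ gram0 power0) psi1.
exists lam^-1; split; first by rewrite invr_eq0.
by rewrite -[g]scale1r -(mulVf lam0) -scalerA psi1 scalemx1.
Qed.

Lemma central_stabilizes t g : central g -> stabilizes g t.
Proof.
move=> [a [a0 ->]]; exists a^-1 => i j l.
rewrite actE invmx_scalar tr_scalar_mx mul_scalar_mx -scalemxAl mul_mx_scalar.
rewrite scalerA !mxE (bigD1 l) //= mxE eqxx mulr1n big1 ?addr0.
  by rewrite mulrA -[a^-1 / a * a]mulrA mulVf // mulr1.
by move=> c /negbTE cl; rewrite mxE eq_sym cl mulr0n mul0r.
Qed.

End Action.

Section Witness.
Variables (F : fieldType) (n : nat).

(* The product e_0 e_0 = e_0 + e_1, e_0 e_j = e_j e_0 = e_(j+1), e_i e_j = [i = j] e_0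
   for i, j > 0 (with e_n = 0).  Its trace form is e_0^*, its Gram matrix is 1,
   so u = e_0 and L_u^k u = e_0 + ... + e_k: power_mx is unitriangular. *)
Definition rigid_witness : tensor F n := fun i j l =>
  if i == 0 :> nat then ((l == j.+1 :> nat)%:R + ((j == 0 :> nat) && (l == 0 :> nat))%:R)
  else if j == 0 :> nat then (l == i.+1 :> nat)%:R
  else ((i == j) && (l == 0 :> nat))%:R.

Lemma rigid_witness_in_C : in_C rigid_witness.
Proof.
move=> [[|i] hi] [[|j] hj] l; rewrite /rigid_witness //=.
- by rewrite addr0.
- by rewrite addr0.
- by rewrite eq_sym.
Qed.

Lemma sum_delta_nat (f : 'I_n -> F) k (hk : (k < n)%N) :
  \sum_(j < n) (j == k :> nat)%:R * f j = f (Ordinal hk).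
Proof.
rewrite (bigD1 (Ordinal hk)) //= eqxx mul1r big1 ?addr0 // => j nj.
suff /negbTE -> : (j : nat) != k by rewrite mul0r.
by apply: contra nj => /eqP jk; apply/eqP/val_inj.
Qed.

Hypothesis n_gt0 : (0 < n)%N.

Lemma trace_vec_witness : trace_vec rigid_witness = \col_i (i == 0 :> nat)%:R.
Proof.
apply/colP => -[[|i] hi]; rewrite !mxE.
  transitivity (\sum_(j < n) (j == 0 :> nat)%:R * (1 : F)).
    apply: eq_bigr => -[[|j] hj] _; rewrite /rigid_witness /= mulr1 ?add0r //.
    by rewrite addr0 ltn_eqF.
  exact: (sum_delta_nat (fun=> 1) n_gt0).
by rewrite big1 // => -[[|j] hj] _; rewrite /rigid_witness //= andbF.
Qed.

Lemma trace_gram_witness : trace_gram rigid_witness = 1%:M.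
Proof.
apply/matrixP => i j; rewrite !mxE.
under eq_bigr do rewrite trace_vec_witness mxE.
rewrite (sum_delta_nat (fun l => rigid_witness i j l) n_gt0) /rigid_witness /=.
by case: i => [[|i] hi]; case: j => [[|j] hj]; rewrite /= ?add0r ?addr0 ?andbT.
Qed.

Lemma trace_dual_witness : trace_dual rigid_witness = \col_i (i == 0 :> nat)%:R.
Proof. by rewrite /trace_dual trace_gram_witness adj1 mul1mx trace_vec_witness. Qed.

Lemma power_vec_witness k l : power_vec rigid_witness k l 0 = (l <= k)%N%:R.
Proof.
elim: k l => [|k IHk] l; first by rewrite /power_vec /= trace_dual_witness mxE leqn0.
rewrite /power_vec iterS -/(power_vec _ k) lmul_mxE.
under eq_bigr do under eq_bigr do rewrite trace_dual_witness mxE -mulrA.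
under eq_bigr do rewrite -mulr_sumr.
rewrite (sum_delta_nat (fun i => \sum_j power_vec rigid_witness k j 0 * rigid_witness i j l) n_gt0).
rewrite /rigid_witness /=; case: l => [[|l] hl] /=.
  transitivity (\sum_(j < n) (j == 0 :> nat)%:R * (j <= k)%N%:R : F).
    by apply: eq_bigr => j _; rewrite IHk andbT add0r mulrC.
  exact: (sum_delta_nat (fun j : 'I_n => (j <= k)%N%:R) n_gt0).
transitivity (\sum_(j < n) (j == l :> nat)%:R * (j <= k)%N%:R : F).
  by apply: eq_bigr => j _; rewrite IHk andbF addr0 eqSS eq_sym mulrC.
exact: (sum_delta_nat (fun j : 'I_n => (j <= k)%N%:R) (ltnW hl)).
Qed.

Lemma rigid_det_witness : rigid_det rigid_witness = 1.
Proof.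
rewrite /rigid_det trace_gram_witness det1 mul1r -det_tr det_trig.
  by apply: big1 => i _; rewrite !mxE power_vec_witness leqnn.
by apply/is_trig_mxP => i j ij; rewrite !mxE power_vec_witness leqNgt ij.
Qed.

End Witness.

Section MapTensor.
Variables (R S : comNzRingType) (f : {rmorphism R -> S}) (n : nat) (t : tensor R n).

Definition map_tensor : tensor S n := fun i j l => f (t i j l).

Lemma map_lmul_mx x : lmul_mx map_tensor (map_mx f x) = map_mx f (lmul_mx t x).
Proof.
apply/matrixP => l j; rewrite !mxE rmorph_sum.
by apply: eq_bigr => i _; rewrite rmorphM mxE.
Qed.

Lemma map_trace_vec : trace_vec map_tensor = map_mx f (trace_vec t).
Proof. by apply/colP => i; rewrite !mxE rmorph_sum. Qed.

Lemma map_trace_gram : trace_gram map_tensor = map_mx f (trace_gram t).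
Proof.
apply/matrixP => i j; rewrite !mxE rmorph_sum.
by apply: eq_bigr => l _; rewrite map_trace_vec rmorphM mxE.
Qed.

Lemma map_trace_dual : trace_dual map_tensor = map_mx f (trace_dual t).
Proof. by rewrite /trace_dual map_mxM map_trace_gram map_trace_vec map_mx_adj. Qed.

Lemma map_power_vec k : power_vec map_tensor k = map_mx f (power_vec t k).
Proof.
elim: k => [|k IHk]; first exact: map_trace_dual.
by rewrite /power_vec !iterS -!/(power_vec _ k) IHk map_trace_dual map_mxM map_lmul_mx.
Qed.

Lemma map_rigid_det : rigid_det map_tensor = f (rigid_det t).
Proof.
have map_power_mx : power_mx map_tensor = map_mx f (power_mx t).
  by apply/matrixP => l k; rewrite !mxE map_power_vec mxE.
by rewrite /rigid_det rmorphM map_trace_gram map_power_mx !det_map_mx.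
Qed.

End MapTensor.

Section GenericTensor.
Variables (k : fieldType) (n : nat).
Local Notation N := (ncoord n).
Local Notation MP := {mpoly k[N]}.

Definition coord_index (i j l : 'I_n) : 'I_N := enum_rank (i, j, l).

Lemma coords_index (t : tensor k n) i j l : coords t (coord_index i j l) = t i j l.
Proof. by rewrite /coords /coord_index enum_rankK. Qed.

Definition generic_tensor : tensor MP n := fun i j l => 'X_(coord_index i j l).

Definition rigid_poly : MP := rigid_det generic_tensor.

Lemma rigid_polyE (t : tensor k n) : rigid_poly.@[coords t] = rigid_det t.
Proof.
rewrite /rigid_poly -map_rigid_det; congr rigid_det.
do 3!apply: functional_extensionality => ?.
by rewrite /map_tensor /generic_tensor /= mevalXU coords_index.
Qed.

Lemma dhomog_prodf (I : finType) (P : pred I) (p : I -> MP) (d : I -> nat) :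
  (forall i, P i -> p i \is (d i).-homog) ->
  \prod_(i | P i) p i \is (\sum_(i | P i) d i)%N.-homog.
Proof.
move=> hom_p; apply: (big_ind2 (fun (q : MP) e => q \is e.-homog)) => //.
- exact: dhomog1.
- by move=> q1 q2 e1 e2; apply: dhomogM.
Qed.

Lemma dhomog_det m (M : 'M[MP]_m) (d : 'I_m -> nat) :
  (forall i j, M i j \is (d j).-homog) -> \det M \is (\sum_j d j)%N.-homog.
Proof.
move=> hom_M; apply: rpred_sum => s _.
rewrite rpredMsign [\sum_j d j](reindex_inj (@perm_inj _ s)) /=.
by apply: dhomog_prodf => i _; apply: hom_M.
Qed.

Lemma dhomog_generic i j l : generic_tensor i j l \is 1.-homog.
Proof. by rewrite dhomogX; apply/eqP; apply: mdeg1. Qed.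

Lemma dhomog_trace_vec i : trace_vec generic_tensor i 0 \is 1.-homog.
Proof. by rewrite mxE; apply: rpred_sum => j _; apply: dhomog_generic. Qed.

Lemma dhomog_trace_gram i j : trace_gram generic_tensor i j \is 2.-homog.
Proof.
rewrite mxE; apply: rpred_sum => l _.
exact: dhomogM (dhomog_trace_vec l) (dhomog_generic i j l).
Qed.

Local Notation dual_deg := ((\sum_(j < n.-1) 2) + 1)%N.

Lemma dhomog_trace_dual i : trace_dual generic_tensor i 0 \is dual_deg.-homog.
Proof.
rewrite mxE; apply: rpred_sum => j _; apply: dhomogM (dhomog_trace_vec j).
rewrite mxE /cofactor rpredMsign.
by apply: dhomog_det => r c; rewrite 2!mxE; apply: dhomog_trace_gram.
Qed.

Lemma dhomog_power_vec m i :
  power_vec generic_tensor m i 0 \is (dual_deg + m * (dual_deg + 1))%N.-homog.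
Proof.
elim: m i => [|m IHm] i; first by rewrite addn0; apply: dhomog_trace_dual.
rewrite /power_vec iterS -/(power_vec _ m) mxE mulSn addnCA.
apply: rpred_sum => j _; apply: dhomogM (IHm j).
rewrite mxE; apply: rpred_sum => a _.
exact: dhomogM (dhomog_trace_dual a) (dhomog_generic a j i).
Qed.

Lemma rigid_poly_homog : exists d, rigid_poly \is d.-homog.
Proof.
eexists; apply: dhomogM.
  by apply: (@dhomog_det _ _ (fun=> 2%N)) => i j; apply: dhomog_trace_gram.
by apply: dhomog_det => i j; rewrite mxE; apply: dhomog_power_vec.
Qed.

End GenericTensor.

Section LineRestriction.
Variables (k : closedFieldType) (N : nat).
Implicit Types (p : {mpoly k[N]}) (a b : 'I_N -> k).

Definition line_point a b s : 'I_N -> k := fun q => a q * (1 - s) + b q * s.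

Lemma line_poly p a b : exists G : {poly k}, forall s, G.[s] = p.@[line_point a b s].
Proof.
exists (\sum_(m <- msupp p) (p@_m)%:P *
          \prod_i ((a i)%:P * (1 - 'X) + (b i)%:P * 'X) ^+ m i) => s.
rewrite mevalE -horner_evalE rmorph_sum; apply: eq_bigr => m _.
rewrite rmorphM rmorph_prod /= horner_evalE hornerC; congr (_ * _).
apply: eq_bigr => i _; rewrite rmorphXn /= horner_evalE; congr (_ ^+ _).
by rewrite !hornerE.
Qed.

(* Each polynomial restricts to a nonzero polynomial on the line, which has
   finitely many roots since k is infinite. *)
Lemma line_nonvanishing (ps : seq {mpoly k[N]}) a b :
  all (fun p => (p.@[a] != 0) || (p.@[b] != 0)) ps ->
  exists s, all (fun p => p.@[line_point a b s] != 0) ps.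
Proof.
move=> ps_ab; suff [G G0 HG] : exists2 G : {poly k}, G != 0 &
    forall s, G.[s] != 0 -> all (fun p => p.@[line_point a b s] != 0) ps.
  by have /closed_nonrootP [s Gs] := G0; exists s; apply: HG.
elim: ps ps_ab => [|p ps IHps] /=; first by exists 1 => //; rewrite oner_eq0.
move=> /andP [p_ab /IHps [G G0 HG]]; have [Gp HGp] := line_poly p a b.
have Gp0 : Gp != 0.
  apply: contraTneq p_ab => Gp0; rewrite negb_or !negbK.
  have at0 : line_point a b 0 =1 a by move=> q; rewrite /line_point subr0 mulr1 mulr0 addr0.
  have at1 : line_point a b 1 =1 b by move=> q; rewrite /line_point subrr mulr0 mulr1 add0r.
  by rewrite -(meval_eq _ at0) -(meval_eq _ at1) -!HGp Gp0 !horner0 eqxx.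
exists (Gp * G) => [|s]; first by rewrite mulf_neq0.
by rewrite hornerM mulf_eq0 negb_or HGp => /andP [-> /HG].
Qed.

End LineRestriction.

Section Density.
Variables (k : closedFieldType) (n : nat).
Implicit Types t : tensor k n.

Definition line_tensor t0 t1 s : tensor k n :=
  fun i j l => t0 i j l * (1 - s) + t1 i j l * s.

Lemma coords_line_tensor t0 t1 s :
  coords (line_tensor t0 t1 s) =1 line_point (coords t0) (coords t1) s.
Proof. by move=> q; rewrite /coords /line_point; case: (enum_val q) => [[i j] l]. Qed.

Lemma line_tensor_in_C t0 t1 s : in_C t0 -> in_C t1 -> in_C (line_tensor t0 t1 s).
Proof. by move=> C0 C1 i j l; rewrite /line_tensor C0 C1. Qed.

Lemma rigid_det_dense : zariski_dense (fun t => rigid_det t != 0).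
Proof.
move=> W [S [_ HS]] [t0 [t0_rep W_t0]].
have [p [Sp p_t0]] := (HS t0 t0_rep).1 W_t0.
case: t0_rep => C0 [i [j [l t0_ijl]]].
have n_gt0 : (0 < n)%N by apply: leq_ltn_trans (ltn_ord i).
pose t1 := @rigid_witness k n.
have [|s] := @line_nonvanishing _ _ [:: p; rigid_poly k n; 'X_(coord_index i j l)]
               (coords t0) (coords t1).
  by rewrite /= !rigid_polyE /t1 rigid_det_witness // mevalXU coords_index p_t0 t0_ijl oner_eq0 orbT.
rewrite /= -!(meval_eq _ (coords_line_tensor t0 t1 s)) mevalXU coords_index rigid_polyE.
case/and4P => p_t rigid_t t_ijl _.
have t_rep : PC_rep (line_tensor t0 t1 s).
  by split; [apply: line_tensor_in_C => //; apply: rigid_witness_in_C | exists i, j, l].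
exists (line_tensor t0 t1 s); do !split => //.
by apply/(HS _ t_rep).2; exists p.
Qed.

End Density.

Unset Implicit Arguments.
Set Strict Implicit.

Theorem theorem6 (k : closedFieldType) (n : nat) (hchar : 2%N \notin [pchar k]) :
  exists U : tensor k n -> Prop,
    zariski_open U /\ zariski_dense U /\
    forall t : tensor k n, PC_rep t -> U t ->
      forall g : 'M[k]_n, g \in unitmx -> (stabilizes g t <-> central g).
Proof.
exists (fun t => rigid_det t != 0); split; [|split].
- exists (fun p => p = rigid_poly k n); split=> [p -> | t _].
    exact: rigid_poly_homog.
  split=> [rigid_t | [p [-> p_t]]]; last by rewrite -rigid_polyE.
  by exists (rigid_poly k n); rewrite rigid_polyE.
- exact: rigid_det_dense.
- move=> t [_ t_nz] rigid_t g g_unit; split.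
    exact: stabilizes_central.
  exact: central_stabilizes.
Qed.
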